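(* Let $n\ge2$ and $1\le m\le n-1$ be integers and let $\alpha$ be real with $m<\alpha<m(n-m)$. Then for primes $p$ there exists a subset $G\subset G(n,n-m)$ such that $|G|\approx p^{\alpha}$ and for every $\xi\in\mathbb{F}_p^n\setminus\{0\}$, \[ |\{W\in G:\ \xi\in W\}|\lesssim |G|\,p^{-m}. \]
   Context: $\mathbb{F}_p$ is the field with $p$ elements and $G(n,k)$ is the set of all $k$-dimensional linear subspaces of $\mathbb{F}_p^n$. $|J|$ denotes cardinality. $f\lesssim g$ means $f\le Cg$ with $C$ independent of $p$ and $\xi$; $f\approx g$ means $f\lesssim g$ and $g\lesssim f$. *)

From mathcomp Require Import all_boot all_algebra.
From Stdlib Require Import Reals.
Set Implicit Arguments. Unset Strict Implicit. Unset Printing Implicit Defensive.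

Definition in_Grassmannian (p n k : nat) (W : {vspace 'rV['F_p]_n}) : bool :=
  \dim W == k.

Definition is_subset_Grassmannian (p n k : nat) (G : seq {vspace 'rV['F_p]_n}) : bool :=
  uniq G && all (@in_Grassmannian p n k) G.

Definition count_containing (p n : nat) (G : seq {vspace 'rV['F_p]_n})
  (xi : 'rV['F_p]_n) : nat := count (fun W : {vspace 'rV['F_p]_n} => xi \in W) G.

From mathcomp Require Import all_boot all_algebra.
From Stdlib Require Import Reals Lra.
From mathcomp Require Import ssrnat zify.
Set Implicit Arguments. Unset Strict Implicit. Unset Printing Implicit Defensive.
Import GRing.Theory.
Local Open Scope ring_scope.

(* With n = (k+1) + m, take the graphs W_A = {(x, x A)} of (k+1) x m matrices
   A = M(t) + [0; B], where the rows of M(t) are the entrywise powers t, t^2, ...,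
   t^(k+1) of t in F^m and B runs over N fixed k x m matrices: this gives N p^m
   distinct subspaces of dimension k+1 = n - m.  A nonzero xi = (u, v) lies in
   W_A iff v = u A.  This is impossible when u = 0; otherwise every t_j is a root
   of a nonzero polynomial of degree at most k+1, so for each B at most (k+1)^m
   vectors t qualify.  Choosing N ~ p^(alpha - m), allowed since alpha - m < k m,
   gives |G| ~ p^alpha and at most (k+1)^m N ~ |G| p^(-m) subspaces through xi. *)

Section GraphSubspace.
Variables (F : fieldType) (k m : nat).

Definition graphv (A : 'M[F]_(k, m)) : {vspace 'rV[F]_(k + m)} :=
  limg (linfun (mulmxr (row_mx 1%:M A))).

Lemma memv_graph A xi : (xi \in graphv A) = (rsubmx xi == lsubmx xi *m A).
Proof.
apply/memv_imgP/eqP => [[x _ ->]|xiA].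
  by rewrite lfunE /= mul_mx_row mulmx1 row_mxKl row_mxKr.
exists (lsubmx xi); first exact: memvf.
by rewrite lfunE /= mul_mx_row mulmx1 -xiA hsubmxK.
Qed.

Lemma dim_graphv A : \dim (graphv A) = k.
Proof.
have ker0 : lker (linfun (@mulmxr F 1 k (k + m) (row_mx 1%:M A))) = 0%VS.
  apply/eqP/lker0P => x y; rewrite !lfunE /= !mul_mx_row !mulmx1.
  by case/eq_row_mx.
by rewrite /graphv limg_dim_eq ?ker0 ?capv0 // dimvf /dim /= mul1n.
Qed.

Lemma graphv_inj : injective graphv.
Proof.
move=> A B eqAB; apply/row_matrixP => i.
have := memv_graph A (row_mx (delta_mx 0 i) (delta_mx 0 i *m A)).
rewrite eqAB memv_graph row_mxKl row_mxKr eqxx => /eqP eAB.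
by rewrite !rowE eAB.
Qed.

Lemma memv_graph_lsubmx0 A xi : xi \in graphv A -> lsubmx xi = 0 -> xi = 0.
Proof.
rewrite memv_graph => /eqP xiA xi0.
by rewrite -(hsubmxK xi) xiA xi0 mul0mx row_mx0.
Qed.

End GraphSubspace.

Lemma count_enum_card (T : finType) (a : pred T) : count a (enum T) = #|a|.
Proof. by rewrite cardE -size_filter /enum_mem filter_predT. Qed.

Lemma card_roots (R : finIdomainType) (P : {poly R}) d :
  P != 0 -> (size P <= d.+1)%N -> (#|[pred x | root P x]| <= d)%N.
Proof.
move=> nzP szP; rewrite cardE -ltnS; apply: leq_trans szP.
apply: max_poly_roots nzP _ (enum_uniq _).
by apply/allP => x; rewrite mem_enum.
Qed.

Lemma card_family_roots (R : finIdomainType) (T : finType) (P : T -> {poly R}) d :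
  (forall j, P j != 0) -> (forall j, size (P j) <= d.+1)%N ->
  (#|finfun.family (fun j => [pred x | root (P j) x])| <= expn d #|T|)%N.
Proof.
move=> nzP szP; rewrite card_family foldrE big_map big_enum -prod_nat_const.
by apply: leq_prod => j _; apply: card_roots.
Qed.

Section MomentCurve.
Variables (F : finFieldType) (k m : nat).

Definition moment_mx (t : {ffun 'I_m -> F}) : 'M[F]_(k.+1, m) :=
  \matrix_(i, j) t j ^+ i.+1.

Definition moment_poly (u : 'rV[F]_k.+1) (c : F) : {poly F} :=
  \poly_(i < k.+2) (if i is i'.+1 then u 0 (inord i') else c).

Lemma size_moment_poly u c : (size (moment_poly u c) <= k.+2)%N.
Proof. exact: size_poly. Qed.

Lemma moment_poly_neq0 u c : u != 0 -> moment_poly u c != 0.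
Proof.
move=> nz_u; apply: contraNneq nz_u => u0.
apply/eqP/rowP => i; have := congr1 (fun q : {poly F} => q`_i.+1) u0.
by rewrite /= coef_poly coef0 ltnS ltn_ord inord_val mxE.
Qed.

Lemma horner_moment_poly u c x :
  (moment_poly u c).[x] = c + \sum_i u 0 i * x ^+ i.+1.
Proof.
rewrite horner_poly big_ord_recl /= expr0 mulr1; congr (_ + _).
by apply: eq_bigr => i _; rewrite inord_val.
Qed.

Lemma card_moment_graph_mem (D : 'M[F]_(k.+1, m)) (xi : 'rV[F]_(k.+1 + m)) :
  xi != 0 -> (#|[pred t | xi \in graphv (moment_mx t + D)]| <= expn k.+1 m)%N.
Proof.
move=> nz_xi; set u := lsubmx xi; set v := rsubmx xi.
have [u0|nz_u] := eqVneq u 0.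
  rewrite eq_card0 // => t; rewrite unfold_in /=.
  by apply: contraNF nz_xi => /memv_graph_lsubmx0/(_ u0) ->.
pose P j := moment_poly u (\sum_i u 0 i * D i j - v 0 j).
rewrite -[m in expn _ m]card_ord.
apply: (leq_trans _ (card_family_roots (P := P) _ _)).
- apply: subset_leq_card; apply/subsetP => t.
  rewrite inE memv_graph -/u -/v => /eqP/rowP xiA; apply/familyP => j.
  rewrite inE /root horner_moment_poly /P.
  have -> : v 0 j = \sum_i u 0 i * (t j ^+ i.+1 + D i j).
    by rewrite xiA mxE; apply: eq_bigr => i _; rewrite !mxE.
  under [X in _ - X]eq_bigr do rewrite mulrDr.
  by rewrite big_split /= opprD addrA addrAC subrr add0r addNr.
- by move=> j; apply: moment_poly_neq0.
- by move=> j; apply: size_moment_poly.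
Qed.

Definition moment_family (Y : seq 'M[F]_(k, m)) : seq 'M[F]_(k.+1, m) :=
  [seq moment_mx t + col_mx (0 : 'rV_m) B | B <- Y, t <- enum {ffun 'I_m -> F}].

Lemma size_moment_family Y : size (moment_family Y) = (size Y * expn #|F| m)%N.
Proof. by rewrite size_allpairs -cardE card_ffun card_ord. Qed.

Lemma moment_family_uniq Y : uniq Y -> uniq (moment_family Y).
Proof.
move=> uY; apply: allpairs_uniq => //; first exact: enum_uniq.
move=> [B t] [B' t'] _ _ /= eqA.
have eq_t : t = t'.
  apply/ffunP => j.
  have := congr1 (fun A : 'M[F]_(k.+1, m) => A (lshift k (0 : 'I_1)) j) eqA.
  by rewrite /= [LHS]mxE [RHS]mxE !(col_mxEu (0 : 'rV[F]_m)) !mxE !addr0.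
move: eqA; rewrite eq_t => /addrI eqB.
by have [_ ->] := eq_col_mx (eqB : col_mx (0 : 'rV[F]_m) B = col_mx 0 B').
Qed.

Lemma count_moment_family Y (xi : 'rV[F]_(k.+1 + m)) : xi != 0 ->
  (count (fun A => xi \in graphv A) (moment_family Y) <= size Y * expn k.+1 m)%N.
Proof.
move=> nz_xi; elim: Y => //= B Y IH.
rewrite count_cat count_map mulSn leq_add //.
by rewrite count_enum_card; apply: card_moment_graph_mem.
Qed.

Lemma exists_moment_graphs N : (N <= expn #|F| (k * m))%N ->
  exists G : seq {vspace 'rV[F]_(k.+1 + m)},
    [/\ uniq G, all (fun W => \dim W == k.+1) G, size G = (N * expn #|F| m)%N &
     forall xi : 'rV[F]_(k.+1 + m), xi != 0 ->
       (count (fun W : {vspace _} => xi \in W) G <= N * expn k.+1 m)%N].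
Proof.
move=> leN; pose Y := take N (enum 'M[F]_(k, m)).
have size_Y : size Y = N by rewrite size_take -cardE card_mx; case: ltngtP leN.
exists (map (@graphv F k.+1 m) (moment_family Y)); split.
- rewrite map_inj_uniq ?moment_family_uniq ?take_uniq ?enum_uniq //.
  exact: graphv_inj.
- by apply/allP => _ /mapP [A _ ->]; rewrite dim_graphv.
- by rewrite size_map size_moment_family size_Y.
- by move=> xi nz_xi; rewrite count_map -size_Y; apply: count_moment_family.
Qed.
End MomentCurve.

Local Close Scope ring_scope.
Local Open Scope R_scope.

Lemma INR_expn a b : INR (expn a b) = INR a ^ b.
Proof. by elim: b => [|b IH]; rewrite ?expn0 // expnS mult_INR IH. Qed.

Lemma Rpower_opp_INR (p m : nat) : (0 < p)%N ->
  Rpower (INR p) (- INR m) = / INR (expn p m).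
Proof.
move=> p_gt0; rewrite Rpower_Ropp Rpower_pow ?INR_expn //.
by apply: (lt_INR 0); apply/ltP.
Qed.

Lemma exists_nat_approx (X : R) : 1 <= X -> exists N : nat, INR N <= X < 2 * INR N.
Proof.
move=> X_ge1; have [lo hi] := base_Int_part X.
have Int_gt0 : (0 < Int_part X)%Z by apply: lt_IZR; lra.
have Int_ge1 : 1 <= IZR (Int_part X) by apply: (IZR_le 1); lia.
exists (Z.to_nat (Int_part X)); rewrite INR_IZR_INZ Znat.Z2Nat.id; [lra | lia].
Qed.

Lemma exists_nat_approx_Rpower (p m D : nat) (alpha : R) : (1 < p)%N ->
  INR m < alpha < INR m + INR D ->
  exists N : nat, (N <= expn p D)%N /\
    INR (N * expn p m) <= Rpower (INR p) alpha < 2 * INR (N * expn p m).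
Proof.
move=> p_gt1 [alpha_gt alpha_lt].
have p_gt1R : 1 < INR p by apply: (lt_INR 1); apply/ltP.
set X := Rpower (INR p) (alpha - INR m).
have X_ge1 : 1 <= X.
  by rewrite -(Rpower_O (INR p)); [apply: Rlt_le; apply: Rpower_lt|]; lra.
have X_lt : X < INR (expn p D).
  by rewrite INR_expn -Rpower_pow; [apply: Rpower_lt|]; lra.
have alphaE : Rpower (INR p) alpha = X * INR (expn p m).
  by rewrite INR_expn -Rpower_pow -?Rpower_plus; [congr Rpower|]; lra.
have [N [N_le N_gt]] := exists_nat_approx X_ge1.
have pm_gt0 : 0 < INR (expn p m) by rewrite INR_expn; apply: pow_lt; lra.
exists N; split; first by apply/leP/INR_le; lra.
by rewrite mult_INR alphaE; split; nra.
Qed.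

Theorem corollary3p3 (n m : nat) (alpha : R) :
  (2 <= n)%N -> (1 <= m)%N -> (m <= n - 1)%N ->
  (INR m < alpha)%R -> (alpha < INR (m * (n - m)))%R ->
  exists C : R, (0 < C)%R /\
    forall p : nat, prime p ->
      exists G : seq {vspace 'rV['F_p]_n},
        is_subset_Grassmannian (n - m) G /\
        (Rpower (INR p) alpha <= C * INR (size G))%R /\
        (INR (size G) <= C * Rpower (INR p) alpha)%R /\
        forall xi : 'rV['F_p]_n, xi != GRing.zero ->
          (INR (count_containing G xi) <= C * INR (size G) * Rpower (INR p) (- INR m))%R.
Proof.
move=> n_ge2 m_ge1 m_le alpha_gt alpha_lt.
have [k def_n] : exists k, n = (k.+1 + m)%N by exists (n - m).-1; lia.
subst n; rewrite addnK mulnS mulnC plus_INR in alpha_lt *.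
set K := expn k.+1 m.
have K_ge1 : 1 <= INR K by apply: (le_INR 1); apply/leP; rewrite expn_gt0.
exists (2 * INR K); split=> [|p p_prime]; first lra.
have [N [N_le [lo hi]]] :=
  exists_nat_approx_Rpower (prime_gt1 p_prime) (conj alpha_gt alpha_lt).
have [|G [uniq_G dim_G size_G count_G]] :=
  exists_moment_graphs (F := 'F_p) (k := k) (m := m) (N := N).
  by rewrite card_Fp.
exists G; rewrite /is_subset_Grassmannian uniq_G dim_G size_G card_Fp //.
have size_ge0 : 0 <= INR (N * expn p m) by apply: pos_INR.
split=> //; split; [nra | split; [nra | move=> xi nz_xi]].
apply: Rle_trans (le_INR _ _ (elimT leP (count_G xi nz_xi))) _.
have pm_gt0 : 0 < INR (expn p m).
  by apply: (lt_INR 0); apply/ltP; rewrite expn_gt0 prime_gt0.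
have -> : 2 * INR K * INR (N * expn p m) * Rpower (INR p) (- INR m)
          = 2 * INR K * INR N.
  by rewrite Rpower_opp_INR ?prime_gt0 // mult_INR; field; lra.
have N_ge0 := pos_INR N; rewrite -/K mult_INR; nra.
Qed.
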